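(* Let $n\ge3$, $1\le d\le n-2$, $D=\binom{n-1}{d}$. Let $H$ be the graph whose vertices are the labeled $d$-out-regular digraphs on $[n]$, two distinct digraphs being adjacent iff one is obtained from the other by changing the out-neighborhood of a single vertex, and let $m_G(G')=\frac1{n(D-1)+1}$ if $G'=G$ or $G'$ is adjacent to $G$, and $0$ otherwise. Then $\kappa(G_1,G_2)\ge\frac1n$ for all distinct $G_1,G_2\in V(H)$.
   Context: A directed graph here has no loops and no multiple arcs; it is $d$-out-regular if every vertex has out-degree $d$. For a graph $H$ with random walk $m$ (each $m_x$ a probability distribution supported on $x$ and its neighbors), $d_H$ the graph distance on $H$, the transportation distance is $W(m_1,m_2)=\inf_A\sum_{x,y}A(x,y)d_H(x,y)$ over couplings $A$ of $m_1,m_2$, and the Ollivier Ricci curvature is $\kappa(x,y)=1-W(m_x,m_y)/d_H(x,y)$. *)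

From HB Require Import structures.
From mathcomp Require Import all_boot all_order all_algebra.
Set Implicit Arguments. Unset Strict Implicit. Unset Printing Implicit Defensive.
Import Order.TTheory GRing.Theory Num.Theory.
Local Open Scope ring_scope.

Fixpoint ball (T : finType) (e : rel T) (k : nat) (x : T) : {set T} :=
  match k with
  | 0 => [set x]
  | k'.+1 => ball e k' x :|: [set y | [exists z in ball e k' x, e z y]]
  end.

(* graph distance: least k with y in ball k x.  In a connected graph every
   distance is < #|T|, so the search range [0, #|T|) suffices. *)
Definition gdist (T : finType) (e : rel T) (x y : T) : nat :=
  find (fun k => y \in ball e k x) (iota 0 #|T|).

Definition coupling (R : realFieldType) (T : finType)
  (m1 m2 : T -> R) (A : T -> T -> R) : Prop :=
  [/\ forall x y, 0 <= A x y,
      forall x, \sum_(y : T) A x y = m1 x &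
      forall y, \sum_(x : T) A x y = m2 y].

Definition transport_cost (R : realFieldType) (T : finType) (e : rel T)
  (A : T -> T -> R) : R :=
  \sum_(x : T) \sum_(y : T) A x y * (gdist e x y)%:R.

Definition W_le (R : realFieldType) (T : finType) (e : rel T)
  (m1 m2 : T -> R) (c : R) : Prop :=
  forall eps : R, 0 < eps ->
    exists A : T -> T -> R, coupling m1 m2 A /\ transport_cost e A <= c + eps.

(* kappa(x,y) >= k  <=>  1 - W(m_x,m_y)/d(x,y) >= k
                    <=>  W(m_x,m_y) <= (1 - k) d(x,y)   (d(x,y) > 0) *)
Definition ricci_ge (R : realFieldType) (T : finType) (e : rel T)
  (m : T -> T -> R) (x y : T) (k : R) : Prop :=
  W_le e (m x) (m y) ((1 - k) * (gdist e x y)%:R).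

(* a loopless simple digraph on 'I_n, given by out-neighbourhoods,
   in which every vertex has out-degree d *)
Definition out_regular (n d : nat) (f : {ffun 'I_n -> {set 'I_n}}) : bool :=
  [forall v, (v \notin f v) && (#|f v| == d)].

Definition outreg (n d : nat) : finType :=
  {f : {ffun 'I_n -> {set 'I_n}} | out_regular d f}.

Definition Hadj (n d : nat) : rel (outreg n d) :=
  fun G G' => (G != G') &&
    [exists v : 'I_n, [forall u : 'I_n, (u != v) ==> (val G u == val G' u)]].

Definition Hwalk (R : realFieldType) (n d : nat) (G G' : outreg n d) : R :=
  if (G' == G) || Hadj G G'
  then ((n * ('C(n.-1, d) - 1) + 1)%N%:R)^-1 else 0.

From HB Require Import structures.
From mathcomp Require Import all_boot all_order all_algebra.
From mathcomp Require Import zify ring.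
Import Order.TTheory GRing.Theory Num.Theory.
Set Implicit Arguments. Unset Strict Implicit. Unset Printing Implicit Defensive.

(* A vertex of H is a tuple of n rows (out-neighbourhoods) and two vertices
   are adjacent iff they differ in exactly one row, so the distance in H is
   the number k of differing rows [gdist_hamming]; this follows from a
   general characterisation of graph distances [gdist_delta].  The walk m_G
   is uniform on the union of the n "stars" of G (change one row), a set of
   1 + n(D-1) digraphs [card_stars].  For G <> H we build an explicit
   coupling [plan] of m_G and m_H: sideways neighbours of G move in parallel
   to the same change of H, and the k+1 digraphs that start a geodesic from
   G to H are spread over those starting a geodesic back, avoiding mirror
   pairs.  Every unit travels at most k, and at most k-1 when it starts from
   one of the 1 + k(D-1) digraphs obtained by changing a row where G and H
   differ [coupled_hamming].  Summing [cost_count] gives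
   W(m_G, m_H) <= (1 - 1/n) k [cost_le], i.e. kappa(G, H) >= 1/n. *)

Section DistanceByGeodesics.
Variables (T : finType) (e : rel T) (delta : T -> T -> nat).
Hypothesis delta_eq0 : forall x y, (delta x y == 0) = (x == y).
Hypothesis delta_triangle : forall x y z, delta x z <= delta x y + delta y z.
Hypothesis delta_edge : forall y z, e y z -> delta y z <= 1.
Hypothesis delta_step : forall x y, 0 < delta x y ->
  exists2 z, delta x z = (delta x y).-1 & e z y.

Lemma delta_ball j x y : y \in ball e j x -> delta x y <= j.
Proof.
elim: j y => [|j IH] y /=; first by rewrite inE leqn0 delta_eq0 eq_sym.
rewrite in_setU inE => /orP [/IH h | /existsP [z /andP [hz hzy]]].
  exact: leq_trans h _.
by rewrite (leq_trans (delta_triangle x z y)) // -addn1 leq_add ?IH ?delta_edge.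
Qed.

Lemma ball_delta x y : y \in ball e (delta x y) x.
Proof.
have [j hj] : exists j, delta x y = j by eexists.
rewrite hj; elim: j y hj => [|j IH] y hj /=.
  by move/eqP: hj; rewrite delta_eq0 => /eqP ->; rewrite inE.
have [|z hz hzy] := delta_step (x := x) (y := y); first by rewrite hj.
rewrite hj /= in hz.
by rewrite in_setU inE; apply/orP; right; apply/existsP; exists z; rewrite IH.
Qed.

Lemma gdist_delta x y : delta x y <= #|T| -> gdist e x y = delta x y.
Proof.
move=> hT; rewrite /gdist; set p := fun k => y \in ball e k x.
have nth_s i : i < #|T| -> nth 0 (iota 0 #|T|) i = i.
  by move=> hi; rewrite nth_iota.
apply/eqP; rewrite eqn_leq; apply/andP; split.
  case: (ltnP (delta x y) #|T|) => h.
    rewrite leqNgt; apply/negP => hlt.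
    by have := before_find 0 hlt; rewrite nth_s // /p ball_delta.
  by rewrite (leq_trans _ h) // -{2}(size_iota 0 #|T|) find_size.
case hp: (has p (iota 0 #|T|)).
  have hf : find p (iota 0 #|T|) < #|T|.
    by rewrite -[X in _ < X](size_iota 0) -has_find.
  by have := nth_find 0 hp; rewrite nth_s // => /delta_ball.
by move: hp; rewrite has_find size_iota => /negbT; rewrite -leqNgt; apply: leq_trans.
Qed.

End DistanceByGeodesics.

Section OutRegularDigraphs.
Variables n d : nat.
Local Notation T := (outreg n d).

Definition outN (x : T) (u : 'I_n) : {set 'I_n} := val x u.

Lemma outN_regular (x : T) u : (u \notin outN x u) && (#|outN x u| == d).
Proof. by have /forallP := valP x; apply. Qed.

Lemma outreg_ext (x y : T) : (forall u, outN x u = outN y u) -> x = y.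
Proof. by move=> h; apply: val_inj; apply/ffunP. Qed.

Definition diffset (x y : T) : {set 'I_n} := [set u | outN x u != outN y u].
Definition hamming (x y : T) : nat := #|diffset x y|.

Lemma diffsetC x y : diffset x y = diffset y x.
Proof. by apply/setP => u; rewrite !inE eq_sym. Qed.

Lemma hammingC x y : hamming x y = hamming y x.
Proof. by rewrite /hamming diffsetC. Qed.

Lemma hamming_eq0 x y : (hamming x y == 0) = (x == y).
Proof.
rewrite cards_eq0; apply/eqP/eqP => [h | ->]; last first.
  by apply/setP => u; rewrite !inE eqxx.
apply: outreg_ext => u; apply/eqP; apply: contraT => hu.
by have := in_set0 u; rewrite -h inE hu.
Qed.

Lemma hamming_triangle x y z : hamming x z <= hamming x y + hamming y z.
Proof.
rewrite /hamming (leq_trans _ (leq_card_setU _ _)) //; apply: subset_leq_card.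
apply/subsetP => u; rewrite !inE; apply: contraLR.
by rewrite negb_or !negbK => /andP [/eqP-> /eqP->].
Qed.

Definition agree_off (G : T) (v : 'I_n) (x : T) : bool :=
  [forall u, (u != v) ==> (outN x u == outN G u)].

Lemma agree_off_refl G v : agree_off G v G.
Proof. by apply/forallP => u; rewrite eqxx implybT. Qed.

Lemma agree_off_inj G v x y : agree_off G v x -> agree_off G v y ->
  outN x v = outN y v -> x = y.
Proof.
move=> /forallP hx /forallP hy hv; apply: outreg_ext => u.
case: (u =P v) => [-> // | /eqP huv].
by have := hx u; have := hy u; rewrite huv /= => /eqP -> /eqP ->.
Qed.

Lemma agree_off_uniq G v w x :
  agree_off G v x -> agree_off G w x -> x != G -> v = w.
Proof.
move=> /forallP hv /forallP hw hx.
have [u hu] : exists u, outN x u != outN G u.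
  apply/existsP; apply: contraR hx; rewrite negb_exists => /forallP h.
  by apply/eqP/outreg_ext => u; apply/eqP; rewrite -[_ == _]negbK h.
have := hv u; have := hw u; rewrite (negbTE hu) /= !implybF !negbK.
by move=> /eqP -> /eqP ->.
Qed.

Lemma agree_off_row G v x : agree_off G v x -> x != G -> outN x v != outN G v.
Proof.
move=> hx; apply: contra => /eqP e; apply/eqP.
exact: agree_off_inj hx (agree_off_refl G v) e.
Qed.

Lemma HadjE G x : Hadj G x = (x != G) && [exists v, agree_off G v x].
Proof.
rewrite /Hadj eq_sym; congr (_ && _); apply: eq_existsb => v.
by apply: eq_forallb => u; case: (u != v) => //=; rewrite eq_sym.
Qed.

Lemma hamming_adj x y : Hadj x y -> hamming x y <= 1.
Proof.
rewrite HadjE => /andP [_ /existsP [v /forallP hv]].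
rewrite /hamming -(cards1 v); apply: subset_leq_card; apply/subsetP => u.
rewrite !inE; apply: contraR => huv.
by have := hv u; rewrite huv eq_sym.
Qed.

Lemma splice_regular (G H : T) (v : 'I_n) :
  out_regular d [ffun u => if u == v then outN H u else outN G u].
Proof. by apply/forallP => u; rewrite ffunE; case: (u == v); apply: outN_regular. Qed.

Definition splice (G H : T) v : T := exist (out_regular d) _ (splice_regular G H v).

Lemma outN_splice G H v u :
  outN (splice G H v) u = if u == v then outN H u else outN G u.
Proof. by rewrite /outN /= ffunE. Qed.

Lemma agree_off_splice G H v : agree_off G v (splice G H v).
Proof.
by apply/forallP => u; apply/implyP => huv; rewrite outN_splice (negbTE huv).
Qed.

Lemma splice_id G H v : v \notin diffset G H -> splice G H v = G.
Proof.
rewrite inE negbK => /eqP hv; apply: outreg_ext => u; rewrite outN_splice.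
by case: (u =P v) => [-> |].
Qed.

Lemma splice_neq G H v : v \in diffset G H -> splice G H v != G.
Proof. by rewrite inE => hv; apply: contra hv => /eqP <-; rewrite outN_splice eqxx. Qed.

Lemma splice_inj G H v w : v \in diffset G H -> splice G H v = splice G H w -> v = w.
Proof.
rewrite inE => hv e; apply/eqP; apply: contraT => hvw.
move: hv; have := congr1 (outN ^~ v) e.
by rewrite !outN_splice eqxx (negbTE hvw) => ->; rewrite eqxx.
Qed.

(* splicing a differing row of [x] into [y] is a step of H towards [x] *)
Lemma hamming_step x y : 0 < hamming x y ->
  exists2 z, hamming x z = (hamming x y).-1 & Hadj z y.
Proof.
case/card_gt0P => v hv; exists (splice y x v).
  rewrite /hamming; have -> : diffset x (splice y x v) = diffset x y :\ v.
    apply/setP => u; rewrite !inE outN_splice.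
    by case: (u =P v) => [-> | ]; rewrite ?eqxx.
  by rewrite (cardsD1 v (diffset x y)) hv.
rewrite HadjE eq_sym splice_neq /=; last by rewrite diffsetC.
by apply/existsP; exists v; apply/forallP => u; apply/implyP => huv;
  rewrite outN_splice (negbTE huv).
Qed.

(* the first steps of the geodesics from [G] to [H], together with [G] *)
Definition toward (G H : T) : {set T} := G |: [set splice G H v | v in diffset G H].

Lemma splice_toward G H v : splice G H v \in toward G H.
Proof.
case: (boolP (v \in diffset G H)) => hv; last by rewrite splice_id ?setU11.
by rewrite !inE imset_f ?orbT.
Qed.

Lemma card_toward G H : #|toward G H| = (hamming G H).+1.
Proof.
rewrite cardsU1 card_in_imset; last by move=> v w hv _; apply: splice_inj.
suff -> : G \notin [set splice G H v | v in diffset G H] by [].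
by apply/imsetP => -[v hv e]; move: (splice_neq hv); rewrite -e eqxx.
Qed.

Lemma gdist_hamming x y : gdist (@Hadj n d) x y = hamming x y.
Proof.
apply: gdist_delta.
- exact: hamming_eq0.
- exact: hamming_triangle.
- exact: hamming_adj.
- exact: hamming_step.
by apply: leq_trans (max_card (mem (toward x y))); rewrite card_toward.
Qed.

End OutRegularDigraphs.

Lemma card_set_sum (T : finType) (P : pred T) : #|[set x | P x]| = \sum_x P x.
Proof.
by rewrite -sum1dep_card big_mkcond; apply: eq_bigr => x _; case: (P x).
Qed.

(* Counting the closed neighbourhoods of H: changing one row gives
   C(n-1, d) digraphs (G included), and these "stars" only meet at G. *)
Section Neighbourhoods.
Variables n d : nat.
Local Notation T := (outreg n d).

Lemma card_star (G : T) v : #|[set x | agree_off G v x]| = 'C(n.-1, d).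
Proof.
have inj : {in [set x | agree_off G v x] &, injective (fun x : T => outN x v)}.
  by move=> x y; rewrite !inE; apply: agree_off_inj.
have -> : n.-1 = #|[set~ v]| by rewrite cardsC1 card_ord.
rewrite -(card_in_imset inj) -cards_draws.
apply: eq_card => A; rewrite inE; apply/imsetP/andP.
  case=> x _ ->; case/andP: (outN_regular x v) => hv ->; split=> //.
  apply/subsetP => u hu; rewrite !inE; apply/eqP => huv.
  by move: hu; rewrite huv (negbTE hv).
case=> hA /eqP hAd.
have regA : out_regular d [ffun u => if u == v then A else outN G u].
  apply/forallP => u; rewrite ffunE.
  case: (u =P v) => [-> | _]; last exact: outN_regular.
  rewrite hAd eqxx andbT; apply/negP => hv.
  by have := subsetP hA v hv; rewrite !inE eqxx.
exists (exist (out_regular d) _ regA); last by rewrite /outN /= ffunE eqxx.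
rewrite inE; apply/forallP => u; apply/implyP => huv.
by rewrite /outN /= ffunE (negbTE huv).
Qed.

Lemma card_stars (G : T) (V : {set 'I_n}) : V != set0 ->
  #|[set x | [exists v in V, agree_off G v x]]| = 1 + #|V| * ('C(n.-1, d) - 1).
Proof.
case/set0Pn => v0 hv0; rewrite card_set_sum.
have split_count x : ([exists v in V, agree_off G v x] : nat) =
    (x == G) + \sum_(v in V) (agree_off G v x && (x != G)).
  case: (x =P G) => [-> | /eqP hx].
    rewrite big1 => [|v _]; last by rewrite andbF.
    by case: existsP => // -[]; exists v0; rewrite hv0 agree_off_refl.
  case: existsP => [[w /andP [hw hxw]] | hnone].
    rewrite (bigD1 w) //= hxw big1 // => u /andP [_ huw].
    by case hu: (agree_off G u x); rewrite // (agree_off_uniq hu hxw hx) eqxx in huw.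
  rewrite big1 // => u hu; case hxu: (agree_off G u x) => //=.
  by case: hnone; exists u; rewrite hu hxu.
rewrite (eq_bigr _ (fun x _ => split_count x)) big_split /= exchange_big /=.
congr (_ + _).
  rewrite -card_set_sum (_ : [set x | x == G] = [set G]) ?cards1 //.
  by apply/setP => x; rewrite !inE.
rewrite -sum_nat_const; apply: eq_bigr => v _.
rewrite -card_set_sum -(card_star G v) (cardsD1 G [set x | agree_off G v x]).
rewrite inE agree_off_refl add1n subSS subn0; apply: eq_card => x.
by rewrite !inE andbC.
Qed.

Lemma walk_support (G x : T) : 0 < n ->
  (x == G) || Hadj G x = [exists v, agree_off G v x].
Proof.
move=> n_gt0; rewrite HadjE; case: (x =P G) => [-> | _] //=.
by apply/esym/existsP; exists (Ordinal n_gt0); apply: agree_off_refl.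
Qed.

End Neighbourhoods.

(* The coupling of m_G and m_H, for distinct G and H at Hamming distance k.
   - a [sideways] neighbour x of G (a row v changed to a set that is neither
     G's nor H's) is sent to the same change of H ([parallel]);
   - the k+1 digraphs of [toward G H] are spread uniformly over the k
     digraphs of [toward H G] other than their "mirror" ([cross]):
     G is not sent to H, and splice G H v is not sent to splice H G v. *)
Section Coupling.
Variables n d : nat.
Local Notation T := (outreg n d).

Definition sideways (G H x : T) : bool :=
  [exists v, [&& agree_off G v x, outN x v != outN G v & outN x v != outN H v]].

Definition parallel (G H x y : T) : bool :=
  [exists v, [&& agree_off G v x, agree_off H v y, outN x v == outN y v,
                 outN x v != outN G v & outN x v != outN H v]].

Definition cross (G H x y : T) : bool :=
  [&& x \in toward G H, y \in toward H G, ~~ ((x == G) && (y == H)) &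
      ~~ [exists v in diffset G H, (x == splice G H v) && (y == splice H G v)]].

Lemma in_toward (G H x : T) :
  (x \in toward G H) = (x == G) || [exists v in diffset G H, x == splice G H v].
Proof.
rewrite !inE; congr (_ || _); apply/imsetP/existsP.
  by case=> v hv ->; exists v; rewrite hv eqxx.
by case=> v /andP [hv /eqP ->]; exists v.
Qed.

Lemma parallel_sym (G H x y : T) : parallel G H x y = parallel H G y x.
Proof.
apply: eq_existsb => v; rewrite [outN y v == _]eq_sym.
case: (outN x v =P outN y v) => [-> | _]; last by rewrite !andbF.
by case: (agree_off G v x); case: (agree_off H v y);
  case: (outN y v != outN G v); case: (outN y v != outN H v).
Qed.

Lemma cross_sym (G H x y : T) : cross G H x y = cross H G y x.
Proof.
rewrite /cross andbCA (andbC (x == G)) diffsetC.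
by under eq_existsb => v do rewrite [X in _ && X]andbC.
Qed.

Lemma card_parallel (G H x : T) : #|[set y | parallel G H x y]| = sideways G H x.
Proof.
case: (boolP (sideways G H x)) => [/existsP [v /and3P [hx hG hH]] | hR]; last first.
  apply/eqP; rewrite cards_eq0; apply/eqP/setP => y; rewrite !inE.
  apply/negbTE; apply: contra hR => /existsP [w /and5P [hxw _ _ hwG hwH]].
  by apply/existsP; exists w; rewrite hxw hwG hwH.
suff -> : [set y | parallel G H x y] = [set splice H x v] by rewrite cards1.
apply/setP => y; rewrite !inE.
apply/idP/eqP => [/existsP [w /and5P [hxw hyw exy hwG hwH]] | ->].
  have xG : x != G by apply: contra hwG => /eqP ->.
  have ewv := agree_off_uniq hxw hx xG; subst w.
  apply: outreg_ext => u; rewrite outN_splice.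
  case: (u =P v) => [-> | /eqP huv]; first exact/esym/eqP.
  by have /forallP /(_ u) := hyw; rewrite huv => /eqP.
apply/existsP; exists v.
by rewrite hx agree_off_splice outN_splice !eqxx hG hH.
Qed.

Lemma card_cross (G H x : T) :
  #|[set y | cross G H x y]| = if x \in toward G H then hamming G H else 0.
Proof.
case: ifP => hx; last first.
  by apply/eqP; rewrite cards_eq0; apply/eqP/setP => y; rewrite !inE /cross hx.
have all_but z : z \in toward H G ->
    [set y | cross G H x y] = toward H G :\ z ->
    #|[set y | cross G H x y]| = hamming G H.
  move=> hz ->; apply/eqP.
  by rewrite -(eqn_add2l (z \in toward H G)) -cardsD1 hz card_toward hammingC.
move: (hx); rewrite in_toward => /orP [/eqP ex | /existsP [v /andP [hv /eqP ex]]].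
  apply: (all_but H); first by rewrite setU11.
  apply/setP => y; rewrite in_setD1 inE /cross hx ex eqxx /= andbCA.
  congr (_ && _); rewrite -[RHS]andbT; congr (_ && _).
  apply/negP => /existsP [w /andP [hw /andP [/eqP e _]]].
  by move: (splice_neq hw); rewrite -e eqxx.
apply: (all_but (splice H G v)); first exact: splice_toward.
apply/setP => y; rewrite in_setD1 inE /cross hx ex (negbTE (splice_neq hv)) /= andbC.
congr (_ && _); congr negb; apply/existsP/eqP.
  by case=> w /and3P [hw /eqP e /eqP ->]; rewrite (splice_inj hv e).
by move=> ->; exists v; rewrite hv !eqxx.
Qed.

Lemma sideways_toward (G H x : T) : ~~ (sideways G H x && (x \in toward G H)).
Proof.
rewrite in_toward; apply/negP => /andP [/existsP [w /and3P [hxw hG hH]]].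
case/orP => [/eqP ex | /existsP [v /andP [hv /eqP ex]]].
  by move: hG; rewrite ex eqxx.
by move: hG hH; rewrite ex !outN_splice; case: (w == v); rewrite eqxx.
Qed.

Lemma sideways_toward_support (G H x : T) :
  sideways G H x || (x \in toward G H) = (x == G) || Hadj G x.
Proof.
rewrite HadjE in_toward; apply/idP/idP.
  case/orP => [/existsP [w /and3P [hxw hG hH]] |
              /orP [-> // | /existsP [v /andP [hv /eqP ex]]]].
    apply/orP; right; apply/andP; split; last by apply/existsP; exists w.
    by apply: contra hG => /eqP ->.
  rewrite ex splice_neq //; apply/orP; right; apply/existsP; exists v.
  exact: agree_off_splice.
case/orP => [-> | /andP [hxG /existsP [v hv]]]; first by rewrite orbT.
have hxv := agree_off_row hv hxG.
case: (boolP (outN x v == outN H v)) => hH; last first.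
  by apply/orP; left; apply/existsP; exists v; rewrite hv hxv hH.
apply/orP; right; apply/orP; right; apply/existsP; exists v.
have hvd : v \in diffset G H by rewrite inE -(eqP hH) eq_sym.
rewrite hvd; apply/eqP; apply: (agree_off_inj hv (agree_off_splice G H v)).
by rewrite outN_splice eqxx (eqP hH).
Qed.

Definition on_diff (G H x : T) : bool := [exists v in diffset G H, agree_off G v x].

Lemma hamming_lt_sub (x y G H : T) t : t \in diffset G H ->
  diffset x y \subset diffset G H :\ t -> hamming x y < hamming G H.
Proof.
move=> ht hs; rewrite /hamming (cardsD1 t (diffset G H)) ht add1n ltnS.
exact: subset_leq_card.
Qed.

Lemma coupled_hamming (G H x y : T) : parallel G H x y || cross G H x y ->
  hamming x y + on_diff G H x <= hamming G H.
Proof.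
case/orP => [/existsP [v /and5P [hx hy exy hG hH]] | ].
  have xG : x != G by apply: contra hG => /eqP ->.
  have hs : diffset x y \subset diffset G H :\ v.
    apply/subsetP => u; rewrite !inE; case: (u =P v) => [-> | /eqP huv /=].
      by rewrite exy.
    have /forallP /(_ u) := hx; have /forallP /(_ u) := hy.
    by rewrite huv /= => /eqP -> /eqP ->.
  case: (boolP (v \in diffset G H)) => hv.
    by rewrite (leq_trans _ (hamming_lt_sub hv hs)) // -addn1 leq_add2l leq_b1.
  have -> : on_diff G H x = false.
    apply/negbTE/existsP => -[w /andP [hw hxw]].
    by move: hv; rewrite -(agree_off_uniq hxw hx xG) hw.
  rewrite addn0 /hamming (cardsD1 v (diffset G H)) (negbTE hv) add0n.
  exact: subset_leq_card.
case/and4P; rewrite !in_toward => hxG hyH hnot hdiag.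
suff lt : hamming x y < hamming G H.
  by rewrite (leq_trans _ lt) // -addn1 leq_add2l leq_b1.
case/orP: hxG => [/eqP ex | /existsP [v /andP [hv /eqP ex]]];
  case/orP: hyH => [/eqP ey | /existsP [w /andP [hw /eqP ey]]].
- by move: hnot; rewrite ex ey !eqxx.
- rewrite diffsetC in hw; apply: (hamming_lt_sub hw).
  apply/subsetP => u; rewrite ex ey !inE outN_splice.
  by case: (u =P w) => [_ | _ ->]; rewrite ?eqxx.
- apply: (hamming_lt_sub hv).
  apply/subsetP => u; rewrite ex ey !inE outN_splice.
  by case: (u =P v) => [_ | _ ->]; rewrite ?eqxx.
have hvw : v != w.
  apply: contra hdiag => /eqP evw; apply/existsP.
  by exists v; rewrite hv ex ey evw !eqxx.
apply: (hamming_lt_sub hv).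
apply/subsetP => u; rewrite ex ey !inE !outN_splice.
case: (u =P v) => [-> | _]; first by rewrite (negbTE hvw) eqxx.
by case: (u =P w) => [_ | _ ->]; rewrite ?eqxx.
Qed.

End Coupling.

Section TransportPlan.
Variables (R : realFieldType) (n d : nat).
Local Notation T := (outreg n d).
Local Open Scope ring_scope.

Definition walk_mass : R := ((n * ('C(n.-1, d) - 1) + 1)%N%:R)^-1.

Definition plan (G H x y : T) : R :=
  walk_mass * ((parallel G H x y)%:R + (cross G H x y)%:R / (hamming G H)%:R).

Lemma walk_mass_ge0 : 0 <= walk_mass.
Proof. by rewrite invr_ge0 ler0n. Qed.

Lemma plan_ge0 G H x y : 0 <= plan G H x y.
Proof. by rewrite mulr_ge0 ?walk_mass_ge0 // addr_ge0 ?divr_ge0 ?ler0n. Qed.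

Lemma plan_sym G H x y : plan G H x y = plan H G y x.
Proof. by rewrite /plan parallel_sym cross_sym hammingC. Qed.

Lemma HwalkE G x : @Hwalk R n d G x = walk_mass * ((x == G) || Hadj G x)%:R.
Proof. by rewrite /Hwalk; case: ifP; rewrite ?mulr1 ?mulr0. Qed.

(* the row of [x] carries mass 1 on sideways neighbours (via [parallel])
   and k * (1/k) on [toward G H] (via [cross]) *)
Lemma plan_row G H x : G != H -> \sum_y plan G H x y = @Hwalk R n d G x.
Proof.
move=> hGH; have hk : (hamming G H)%:R != 0 :> R by rewrite pnatr_eq0 hamming_eq0.
rewrite -mulr_sumr big_split /= -mulr_suml -!natr_sum -!card_set_sum.
rewrite card_parallel card_cross HwalkE -(sideways_toward_support G H x); congr (_ * _).
have := sideways_toward G H x.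
by case: (sideways G H x); case: (x \in toward G H) => //= _;
  rewrite ?mul0r ?addr0 ?add0r ?mulfV.
Qed.

Lemma plan_coupling G H : G != H ->
  coupling (@Hwalk R n d G) (@Hwalk R n d H) (plan G H).
Proof.
move=> hGH; split=> [x y | x | y]; first exact: plan_ge0.
  exact: plan_row.
under eq_bigr => x _ do rewrite plan_sym.
by apply: plan_row; rewrite eq_sym.
Qed.

Lemma plan_cost G H : G != H ->
  transport_cost (@Hadj n d) (plan G H) <=
  walk_mass * (\sum_x (hamming G H - on_diff G H x) * ((x == G) || Hadj G x))%:R.
Proof.
move=> hGH; rewrite natr_sum mulr_sumr; apply: ler_sum => x _.
have -> : walk_mass * ((hamming G H - on_diff G H x) * ((x == G) || Hadj G x))%:R
    = \sum_y plan G H x y * (hamming G H - on_diff G H x)%:R.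
  by rewrite -mulr_suml plan_row // HwalkE natrM; ring.
apply: ler_sum => y _; rewrite gdist_hamming.
case: (boolP (parallel G H x y || cross G H x y)) => hxy; last first.
  move: hxy; rewrite negb_or /plan => /andP [/negbTE -> /negbTE ->].
  by rewrite mul0r addr0 mulr0 !mul0r.
have hc := coupled_hamming hxy.
rewrite ler_wpM2l ?plan_ge0 // ler_nat leq_subRL; first by rewrite addnC.
exact: leq_trans (leq_addl _ _) hc.
Qed.

End TransportPlan.

(* Total transported distance, before normalisation: with D1 = D - 1, the
   support of m_G has 1 + n D1 points, k - 1 is paid on the 1 + k D1 points
   that are [on_diff], and k on the others. *)
Lemma cost_count n d (G H : outreg n d) : 0 < n -> G != H ->
  \sum_x (hamming G H - on_diff G H x) * ((x == G) || Hadj G x)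
    + (1 + hamming G H * ('C(n.-1, d) - 1))
  = hamming G H * (1 + n * ('C(n.-1, d) - 1)).
Proof.
move=> n_gt0 hGH; set k := hamming G H.
have cardU : #|[set x | on_diff G H x]| = 1 + k * ('C(n.-1, d) - 1).
  by apply: card_stars; rewrite -card_gt0 lt0n hamming_eq0.
have cardS : #|[set x | (x == G) || Hadj G x]| = 1 + n * ('C(n.-1, d) - 1).
  have : [set: 'I_n] != set0 by rewrite -card_gt0 cardsT card_ord.
  move/(card_stars G); rewrite cardsT card_ord => <-.
  apply: eq_card => x; rewrite !inE walk_support //.
  by apply: eq_existsb => v; rewrite inE.
rewrite -cardU -cardS !card_set_sum big_distrr -big_split /=; apply: eq_bigr => x _.
have support_on_diff : on_diff G H x -> (x == G) || Hadj G x.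
  by case/existsP => v /andP [_ hv]; rewrite walk_support //; apply/existsP; exists v.
case hU: (on_diff G H x).
  by rewrite (support_on_diff hU) /= !muln1 subnK // lt0n hamming_eq0.
by case: ((x == G) || Hadj G x); rewrite /= ?muln1 ?muln0 ?subn0 ?addn0.
Qed.

Local Open Scope ring_scope.

Lemma cost_le (R : realFieldType) (n k D1 s : nat) : (0 < n)%N -> (k <= n)%N ->
  (s + (1 + k * D1) = k * (1 + n * D1))%N ->
  ((n * D1 + 1)%N%:R)^-1 * s%:R <= (1 - n%:R^-1) * k%:R :> R.
Proof.
move=> n_gt0 k_le_n hs.
have nat_ineq : (s * n <= (n - 1) * k * (n * D1 + 1))%N by nia.
have N_gt0 : (0 : R) < (n * D1 + 1)%N%:R by rewrite ltr0n addn1.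
rewrite mulrC ler_pdivrMr //.
have -> : (1 - n%:R^-1) * k%:R * (n * D1 + 1)%N%:R
    = ((n - 1) * k * (n * D1 + 1))%N%:R / n%:R :> R.
  by rewrite !natrM natrB //; field; rewrite pnatr_eq0 -lt0n.
by rewrite ler_pdivlMr ?ltr0n // -natrM ler_nat.
Qed.

Theorem mainTheorem8 (R : realFieldType) (n d : nat)
  (hn : (3 <= n)%N) (hd1 : (1 <= d)%N) (hd2 : (d <= n - 2)%N)
  (G1 G2 : outreg n d) (hneq : G1 != G2) :
  ricci_ge (@Hadj n d) (@Hwalk R n d) G1 G2 (n%:R)^-1.
Proof.
have n_gt0 : (0 < n)%N by apply: leq_trans hn.
have k_le_n : (hamming G1 G2 <= n)%N.
  by rewrite -[X in (_ <= X)%N](card_ord n) max_card.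
move=> eps eps_gt0; exists (plan R G1 G2); split; first exact: plan_coupling.
rewrite gdist_hamming; apply: le_trans (plan_cost R hneq) _.
rewrite -[X in X <= _]addr0; apply: lerD; last exact: ltW.
exact: cost_le n_gt0 k_le_n (cost_count n_gt0 hneq).
Qed.
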